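(* Let $k\ge1$, $n\ge0$, let $m_1,\dots,m_k$ be nonnegative integers and $t_1,\dots,t_{k-1}$ nonnegative integers. There is a bijection between the set of $k$-marked Durfee symbols $\eta$ of $n$ with $\rho_i(\eta)=m_i$ for $1\le i\le k$ and $\mathrm{nb}_i(\eta)=t_i$ for $1\le i\le k-1$, and the set of $k$-marked strict shifted Durfee symbols $\bar\eta$ of $n$ with $\rho_i(\bar\eta)=m_i+2t_i$ for $1\le i\le k-1$ and $\rho_k(\bar\eta)=m_k$.
   Context: A partition is a finite nonincreasing sequence $\lambda=(\lambda_1,\dots,\lambda_r)$ of positive integers (possibly empty); $l(\lambda)=r$, $|\lambda|=\sum\lambda_i$, $\lambda_1$ the largest part. Let $k\ge1$. A $k$-marked Durfee symbol of $n$ is an array $\eta=\begin{pmatrix}\alpha^k,&\dots,&\alpha^1\\ \beta^k,&\dots,&\beta^1\end{pmatrix}_D$ consisting of an integer $D\ge0$ and $2k$ partitions $\alpha^i,\beta^i$ with $\sum_{i=1}^k(|\alpha^i|+|\beta^i|)+D^2=n$, such that: (1) $\alpha^i$ is nonempty for $1\le i<k$; (2) for $1\le i<k$ every part of $\beta^i$ is $\le\alpha^i_1$, and for $2\le i\le k$ every part of $\alpha^i$ and every part of $\beta^i$ is $\ge\alpha^{i-1}_1$; (3) all parts of $\alpha^k$ and $\beta^k$ are $\le D$. The pair $(\alpha^i,\beta^i)$ is the $i$th vector. The $i$th rank is $\rho_i(\eta)=l(\alpha^i)-l(\beta^i)-1$ for $1\le i<k$ and $\rho_k(\eta)=l(\alpha^k)-l(\beta^k)$.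 A pair of partitions $(\alpha,\beta)$ is strict shifted if $l(\alpha)>l(\beta)$ and $\alpha_{i+1}>\beta_i$ for $1\le i\le l(\beta)$. A $k$-marked Durfee symbol is strict shifted if each of its vectors $(\alpha^i,\beta^i)$ with $1\le i\le k-1$ is strict shifted. Balanced parts: for a pair of partitions $(\gamma,\delta)$, with the convention $\gamma_j=0$ for $j>l(\gamma)$, the parts $\delta_1,\dots,\delta_{l(\delta)}$ are classified recursively in increasing order of index: $\delta_i$ is balanced iff $\gamma_{i+1}\le\delta_i$ and the number of indices $j$ with $2\le j\le l(\gamma)$ and $\gamma_j>\delta_i$ equals the number of indices $j<i$ for which $\delta_j$ is unbalanced. $b(\gamma,\delta)$ is the number of balanced parts. The $i$th balanced number of a $k$-marked Durfee symbol $\eta$ is $\mathrm{nb}_i(\eta)=b(\alpha^i,\beta^i)$ for $1\le i<k$ and $\mathrm{nb}_k(\eta)=0$. *)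

From mathcomp Require Import all_boot all_order all_algebra.
Set Implicit Arguments. Unset Strict Implicit. Unset Printing Implicit Defensive.
Import GRing.Theory Num.Theory.

(* Parts are 1-based in the paper: lambda_i = nth 0 lambda (i-1);
   nth 0 returns 0 beyond the length (the paper's convention gamma_j = 0). *)
Definition is_partition (l : seq nat) : bool :=
  all (fun x => 0 < x) l && sorted geq l.

Definition lpart (l : seq nat) : nat := head 0 l.

(* A (candidate) k-marked Durfee symbol: the integer D and the list of
   vectors [:: (alpha^1,beta^1); ...; (alpha^k,beta^k)]. *)
Record dsymb := DSymb { ds_D : nat; ds_vec : seq (seq nat * seq nat) }.

(* 1-based access to the i-th vector *)
Definition alpha (e : dsymb) (i : nat) : seq nat :=
  (nth ([::], [::]) (ds_vec e) i.-1).1.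
Definition beta (e : dsymb) (i : nat) : seq nat :=
  (nth ([::], [::]) (ds_vec e) i.-1).2.

Definition ds_weight (e : dsymb) : nat :=
  sumn [seq sumn v.1 + sumn v.2 | v <- ds_vec e] + ds_D e ^ 2.

Definition is_kmds (k n : nat) (e : dsymb) : Prop :=
  size (ds_vec e) = k /\
  (forall i, 1 <= i <= k -> is_partition (alpha e i) /\ is_partition (beta e i)) /\
  ds_weight e = n /\
  (forall i, 1 <= i < k -> alpha e i != [::]) /\
  (forall i, 1 <= i < k -> all (fun x => x <= lpart (alpha e i)) (beta e i)) /\
  (forall i, 2 <= i <= k ->
     all (fun x => lpart (alpha e i.-1) <= x) (alpha e i) /\
     all (fun x => lpart (alpha e i.-1) <= x) (beta e i)) /\
  (all (fun x => x <= ds_D e) (alpha e k) /\ all (fun x => x <= ds_D e) (beta e k)).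

Definition rank (k : nat) (e : dsymb) (i : nat) : int :=
  if i < k then ((size (alpha e i))%:Z - (size (beta e i))%:Z - 1)%R
  else ((size (alpha e i))%:Z - (size (beta e i))%:Z)%R.

Definition strict_shifted (a b : seq nat) : Prop :=
  size b < size a /\ (forall i, i < size b -> nth 0 b i < nth 0 a i.+1).

Definition is_strict_shifted_kmds (k n : nat) (e : dsymb) : Prop :=
  is_kmds k n e /\ (forall i, 1 <= i < k -> strict_shifted (alpha e i) (beta e i)).

(* balanced parts of (g, d): scanning d_1, d_2, ... in order; [i] is the
   1-based index of the current part x = d_i (so g_{i+1} = nth 0 g i),
   [u] is the number of unbalanced parts d_j, j < i, found so far.
   count over [behead g] counts the indices 2 <= j <= l(g) with g_j > x. *)
Fixpoint bal_aux (g d : seq nat) (i u : nat) : nat :=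
  match d with
  | [::] => 0
  | x :: d' =>
      if (nth 0 g i <= x) && (count (fun y => x < y) (behead g) == u)
      then (bal_aux g d' i.+1 u).+1
      else bal_aux g d' i.+1 u.+1
  end.

Definition balanced (g d : seq nat) : nat := bal_aux g d 1 0.

Definition nb (k : nat) (e : dsymb) (i : nat) : nat :=
  if i < k then balanced (alpha e i) (beta e i) else 0.

From mathcomp Require Import all_boot all_order all_algebra zify.
From Stdlib Require Import ProofIrrelevance.
Set Implicit Arguments. Unset Strict Implicit. Unset Printing Implicit Defensive.
Import GRing.Theory.

(* The bijection keeps D and the k-th vector and acts separately on each
   vector (alpha, beta) = (A :: a, b) with i < k. Merge the parts of a (as
   opening brackets) and of b (as closing brackets) into one word, by
   nonincreasing size with closers before openers of equal size. Then the
   balanced parts of beta are exactly the unmatched closers of this word,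
   and the pair is strict shifted exactly when every closer is matched.
   phi turns every unmatched closer into an opener, so t parts move from
   beta to alpha and the rank grows by 2 t; its inverse psi t turns back the
   first t "free" openers (those followed by no unmatched closer). *)

Local Notation geq_trans := (rev_trans leq_trans).

Section BracketWords.
Variable T : Type.

(* A letter (x, true) is a closing bracket, (x, false) an opening one. *)
Notation word := (seq (T * bool)).

(* Number of unmatched closers of s, computed right to left: each opener
   cancels one pending closer on its right. *)
Fixpoint unmatched (s : word) : nat :=
  if s is p :: r then (if p.2 then (unmatched r).+1 else (unmatched r).-1) else 0.

(* The same count computed left to right, when c openers are pending in
   front of s: each closer cancels one pending opener on its left. *)
Fixpoint unmatched_after (c : nat) (s : word) : nat :=
  if s is p :: r then
    if p.2 then (if c is c'.+1 then unmatched_after c' r else (unmatched_after 0 r).+1)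
    else unmatched_after c.+1 r
  else 0.

(* Turn every unmatched closer into an opener (c openers pending in front). *)
Fixpoint reopen (c : nat) (s : word) : word :=
  if s is p :: r then
    if p.2 then (if c is c'.+1 then p :: reopen c' r else (p.1, false) :: reopen 0 r)
    else p :: reopen c.+1 r
  else [::].

(* Turn the first k free openers into closers; an opener is free when the
   rest of the word has no unmatched closer. This inverts reopen. *)
Fixpoint reclose (k : nat) (s : word) : word :=
  if s is p :: r then
    if p.2 then p :: reclose k r
    else if (0 < k) && (unmatched r == 0) then (p.1, true) :: reclose k.-1 r
    else p :: reclose k r
  else [::].

Lemma unmatched_afterE c s : unmatched_after c s = unmatched s - c.
Proof.
elim: s c => [|[v [|]] r IH] c //=.
  by case: c => [|c]; rewrite IH ?subn0 ?subSS.
by rewrite IH; case: (unmatched r) => [|d] //=; rewrite subSS.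
Qed.

Lemma unmatched_reopen_le c s : unmatched (reopen c s) <= c.
Proof.
elim: s c => [|[v [|]] r IH] c //=; last by have := IH c.+1; case: (unmatched _).
case: c => [|c] /=; last by rewrite ltnS IH.
by case: (unmatched _) (IH 0) => [|[|d]].
Qed.

Lemma unmatched_reopen_ge c s : 0 < unmatched_after c s -> c <= unmatched (reopen c s).
Proof.
elim: s c => [|[v [|]] r IH] c //=; last by move/IH; case: (unmatched _).
by case: c => [|c] //= /IH.
Qed.

Lemma reopenK c s : reclose (unmatched_after c s) (reopen c s) = s.
Proof.
elim: s c => [|[v [|]] r IH] c //=.
  case: c => [|c] /=; rewrite ?IH //.
  by have := unmatched_reopen_le 0 r; rewrite leqn0 => /eqP ->.
case: (posnP (unmatched_after c.+1 r)) => [h0|h].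
  by rewrite h0 /=; congr (_ :: _); rewrite -[RHS](IH c.+1) h0.
have := unmatched_reopen_ge h; case: (unmatched (reopen c.+1 r)) => [|d] //= _.
by rewrite IH.
Qed.

Lemma recloseK k c s :
  (0 < k -> c = unmatched s) -> unmatched s <= c -> reopen c (reclose k s) = s.
Proof.
elim: s k c => [|[v [|]] r IH] k c //=.
  by case: c => [|c] //= h1 h2; rewrite IH // => /h1 [].
case: k => [|k] /=.
  by move=> _ h; rewrite IH //; case: (unmatched r) h.
case: eqP => [r0|r0] /= h1 h2.
  by rewrite r0 /= in h1; rewrite (h1 erefl) /= IH // r0.
by rewrite IH //; move: (h1 erefl) h2 r0; case: (unmatched r) => [|d] //= ->.
Qed.

Lemma reclose0 s : reclose 0 s = s.
Proof. by elim: s => [|[v [|]] r IH] //=; rewrite IH. Qed.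

(* Under the hypotheses of recloseK, reclose k creates exactly k unmatched
   closers, provided the counting hypothesis guarantees k free openers. *)
Lemma unmatched_reclose k c s :
  (0 < k -> c = unmatched s) -> unmatched s <= c ->
  k + count (fun p => p.2) s <= count (fun p => ~~ p.2) s + unmatched s ->
  unmatched_after c (reclose k s) = k.
Proof.
elim: s k c => [|[v [|]] r IH] k c /=.
- by rewrite addn0 leqn0 => _ _ /eqP.
- case: c => [|c] //= h1 h2 h3; apply: IH => //; first by move=> /h1 [].
  by move: h3; rewrite add1n add0n !addnS ltnS.
case: k => [|k] /=.
  move=> _ h _; rewrite reclose0 unmatched_afterE; apply/eqP; rewrite subn_eq0.
  by case: (unmatched r) h.
case: (unmatched r =P 0) => [r0|r0] /= h1 h2.
  rewrite r0 /= in h1; rewrite (h1 erefl) /= => h3; rewrite IH // ?r0 //.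
  by move: h3; rewrite r0 add1n add0n !addn0 addSn ltnS.
move: (h1 erefl) h2 r0; case E: (unmatched r) => [|d] //= -> _ _ h3.
by apply: IH; rewrite ?E //; move: h3; rewrite add0n add1n !addSn addnS.
Qed.

Lemma count_reopen c s :
  count (fun p => p.2) (reopen c s) + unmatched_after c s = count (fun p => p.2) s.
Proof.
elim: s c => [|[v [|]] r IH] c //=; last by rewrite IH.
by case: c => [|c] /=; [rewrite add0n addnS IH | rewrite -addnA IH].
Qed.

Lemma count_flags (s : word) :
  count (fun p => ~~ p.2) s + count (fun p => p.2) s = size s.
Proof. by rewrite addnC count_predC. Qed.

Lemma map_fst_reopen c s : map fst (reopen c s) = map fst s.
Proof. by elim: s c => [|[v [|]] r IH] c //=; case: c => [|c] /=; rewrite IH. Qed.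

Lemma map_fst_reclose k s : map fst (reclose k s) = map fst s.
Proof.
elim: s k => [|[v [|]] r IH] k //=; first by rewrite IH.
by case: ifP => _; rewrite /= IH.
Qed.

End BracketWords.

Definition letter_le (x y : nat * bool) : bool :=
  (y.1 < x.1) || ((x.1 == y.1) && (y.2 ==> x.2)).

Lemma letter_le_total : total letter_le.
Proof.
by move=> [x a] [y b]; rewrite /letter_le /=; case: ltngtP => //= _; case: a; case: b.
Qed.

Lemma letter_le_trans : transitive letter_le.
Proof.
move=> [y b] [x a] [z c]; rewrite /letter_le /=.
case/orP=> [h1|/andP[/eqP <- h1]]; case/orP=> [h2|/andP[/eqP <- h2]].
- by rewrite (ltn_trans h2 h1).
- by rewrite h1.
- by rewrite h2.
- by rewrite eqxx ltnn /=; case: a b c h1 h2 => [] [] [].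
Qed.

Lemma letter_le_anti : antisymmetric letter_le.
Proof.
move=> [x a] [y b]; rewrite /letter_le /=; case: ltngtP => //= -> /andP[].
by case: a; case: b.
Qed.

(* While reopening, a letter turned into an opener is followed by letters of
   the same size that are turned into openers as well (the counter stays 0). *)
Lemma reopen_path c s v b b' : path letter_le (v, b) s ->
  b' = b \/ [/\ b' = false, b & c = 0] -> path letter_le (v, b') (reopen c s).
Proof.
elim: s c v b b' => [|[w l] r IH] c v b b' //= /andP[hvw hr] hb.
have hvw' : letter_le (v, b') (w, l && (0 < c)).
  move: hvw {hr}; rewrite /letter_le /=; case: ltngtP => //= _.
  case: hb => [-> | [-> -> ->]]; last by rewrite andbF.
  by case: l; case: b => //=; rewrite implybT.
case: l hvw' hr {hvw} => /= hvw' hr; last by rewrite hvw' /=; apply: IH hr _; left.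
by case: c hvw' hb => [|c] /= hvw' _; rewrite hvw' /=; apply: IH hr _; [right|left].
Qed.

Lemma reopen_sorted c s : sorted letter_le s -> sorted letter_le (reopen c s).
Proof.
case: s => [|[w [|]] r] //= hr; last by apply: reopen_path hr _; left.
by case: c => [|c] /=; apply: reopen_path hr _; [right | left].
Qed.

(* While reclosing, an opener turned into a closer is free, so the letters
   of the same size just before it stay sorted. *)
Lemma reclose_path k s v b b' : path letter_le (v, b) s ->
  b' = b \/ (b = false /\ b' = true) ->
  (b' = false -> ~~ ((0 < k) && (unmatched s == 0))) ->
  path letter_le (v, b') (reclose k s).
Proof.
elim: s k v b b' => [|[w l] r IH] k v b b' //= /andP[hvw hr] hb hfree.
case: l hvw hr hfree => /= hvw hr hfree.
  have -> /= : letter_le (v, b') (w, true).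
    move: hvw hb {hfree}; rewrite /letter_le /=; case: ltngtP => //= _.
    by case: b; case: b' => // _ [|[]].
  by apply: IH hr _ _ => //; left.
case E: ((0 < k) && (unmatched r == 0)) => /=.
  have -> /= : letter_le (v, b') (w, true).
    move: hvw hb hfree; rewrite /letter_le /=; case: ltngtP => //= _.
    by case: b' => //= _ _ /(_ erefl); case/andP: E => -> /eqP ->.
  by apply: IH hr _ _ => //; right.
have -> /= : letter_le (v, b') (w, false).
  by move: hvw; rewrite /letter_le /=; case: ltngtP.
by apply: IH hr _ _ => //; [left | rewrite E].
Qed.

Lemma reclose_sorted k s : sorted letter_le s -> sorted letter_le (reclose k s).
Proof.
case: s => [|[w [|]] r] //= hr; first by apply: reclose_path hr _ _ => //; left.
by case: ifP => E /=; apply: reclose_path hr _ _ => //; [right | left | rewrite E].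
Qed.

Definition closers (s : seq (nat * bool)) : seq nat := [seq p.1 | p <- s & p.2].
Definition openers (s : seq (nat * bool)) : seq nat := [seq p.1 | p <- s & ~~ p.2].

Definition word_of (b a : seq nat) : seq (nat * bool) :=
  merge letter_le [seq (x, true) | x <- b] [seq (x, false) | x <- a].

Lemma word_of_nil_r b : word_of b [::] = [seq (x, true) | x <- b].
Proof. by case: b. Qed.

Lemma word_of_cons x b y a : word_of (x :: b) (y :: a) =
  if y <= x then (x, true) :: word_of b (y :: a) else (y, false) :: word_of (x :: b) a.
Proof. by rewrite /word_of /= {1}/letter_le /= andbT eq_sym orbC -leq_eqVlt. Qed.

Lemma closers_word_of b a : closers (word_of b a) = b.
Proof.
elim: b a => [|x b IHb] a; first by elim: a.
elim: a => [|y a IHa]; first by rewrite word_of_nil_r /closers; elim: (x :: b) => //= z l ->.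
by rewrite word_of_cons; case: ifP => _; rewrite /closers /= -/(closers _) ?IHb ?IHa.
Qed.

Lemma openers_word_of b a : openers (word_of b a) = a.
Proof.
elim: b a => [|x b IHb] a; first by rewrite /openers; elim: a => //= z l ->.
elim: a => [|y a IHa]; first by rewrite word_of_nil_r; elim: (x :: b).
by rewrite word_of_cons; case: ifP => _; rewrite /openers /= -/(openers _) ?IHb ?IHa.
Qed.

Lemma word_of_sorted b a : sorted geq b -> sorted geq a -> sorted letter_le (word_of b a).
Proof.
have sorted_tag c (l : seq nat) : sorted geq l -> sorted letter_le [seq (x, c) | x <- l].
  rewrite sorted_map; apply: sub_sorted => x y /=.
  by rewrite /letter_le /= implybb andbT eq_sym orbC -leq_eqVlt.
by move=> hb ha; apply: (merge_sorted letter_le_total); apply: sorted_tag.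
Qed.

Lemma word_of_split s : sorted letter_le s -> word_of (closers s) (openers s) = s.
Proof.
have tag_closers : [seq (x, true) | x <- closers s] = [seq p <- s | p.2].
  by elim: s => [|[v [|]] s IH] //=; rewrite IH.
have tag_openers : [seq (x, false) | x <- openers s] = [seq p <- s | ~~ p.2].
  by clear tag_closers; elim: s => [|[v [|]] s IH] //=; rewrite IH.
move=> hs; apply: (sorted_eq letter_le_trans letter_le_anti) => //.
  rewrite /word_of tag_closers tag_openers.
  by apply: (merge_sorted letter_le_total); apply: sorted_filter => //; apply: letter_le_trans.
by rewrite /word_of perm_merge tag_closers tag_openers perm_filterC.
Qed.

Lemma perm_word_of b a : perm_eq (map fst (word_of b a)) (b ++ a).
Proof.
have : perm_eq (word_of b a) ([seq (x, true) | x <- b] ++ [seq (x, false) | x <- a]).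
  by rewrite /word_of perm_merge.
by move/(perm_map fst); rewrite map_cat -!map_comp !map_id.
Qed.

Lemma sorted_openers s : sorted letter_le s -> sorted geq (openers s).
Proof.
move=> /(sorted_filter letter_le_trans (fun p : nat * bool => ~~ p.2)).
rewrite sorted_map; apply: sub_sorted => -[x ?] [y ?].
by rewrite /letter_le /= => /orP[/ltnW|/andP[/eqP ->]].
Qed.

Lemma sorted_closers s : sorted letter_le s -> sorted geq (closers s).
Proof.
move=> /(sorted_filter letter_le_trans (fun p : nat * bool => p.2)).
rewrite sorted_map; apply: sub_sorted => -[x ?] [y ?].
by rewrite /letter_le /= => /orP[/ltnW|/andP[/eqP ->]].
Qed.

Lemma mem_openers_closers s x : x \in openers s ++ closers s -> x \in map fst s.
Proof.
by rewrite mem_cat => /orP[] /mapP[p]; rewrite mem_filter => /andP[_ hp] ->; apply: map_f.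
Qed.

Lemma sumn_openers_closers s : sumn (openers s) + sumn (closers s) = sumn (map fst s).
Proof. by elim: s => [|[x [|]] s IH] //=; rewrite -IH; [rewrite addnCA | rewrite addnA]. Qed.

Lemma size_openers s : size (openers s) = count (fun p => ~~ p.2) s.
Proof. by rewrite size_map size_filter. Qed.

Lemma size_closers s : size (closers s) = count (fun p => p.2) s.
Proof. by rewrite size_map size_filter. Qed.

(* Balanced parts of (A :: a, d), when u unmatched parts have been found so
   far: the index condition of the definition is automatic (bal_auxE), so
   only the comparison with the parts a of alpha beyond the first matters. *)
Fixpoint balanced_from (a d : seq nat) (u : nat) : nat :=
  if d is x :: d' then
    if count (fun y => x < y) a == u then (balanced_from a d' u).+1
    else balanced_from a d' u.+1
  else 0.

Lemma count_gt_path (a : seq nat) y x :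
  path geq y a -> y <= x -> count (fun z => x < z) a = 0.
Proof.
move=> /(order_path_min geq_trans) /allP h hyx; apply/eqP; rewrite -leqn0 leqNgt -has_count.
by apply/hasP => -[z /h /= hz]; rewrite ltnNge (leq_trans hz hyx).
Qed.

(* In a partition, the parts larger than x form a prefix. *)
Lemma nth_gt a x j : sorted geq a -> (x < nth 0 a j) = (j < count (fun y => x < y) a).
Proof.
elim: a j => [|y a IH] j /=; first by rewrite nth_nil.
move=> hp; have ha := path_sorted hp.
case: (ltnP x y) => hxy /=; first by case: j => [|j] //=; rewrite IH // add1n ltnS.
rewrite add0n (count_gt_path hp hxy); case: j => [|j] /=; first by rewrite ltnNge hxy.
by rewrite IH // (count_gt_path hp hxy).
Qed.

Lemma bal_auxE A a d j u :
  sorted geq a -> u <= j -> bal_aux (A :: a) d j.+1 u = balanced_from a d u.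
Proof.
move=> ha; elim: d j u => [|x d IH] j u //= huj.
case: eqP => [e|ne]; last by rewrite andbF IH.
by rewrite andbT leqNgt nth_gt // e ltnNge huj /= IH // leqW.
Qed.

(* Reading the word of (d, a1 ++ a2) after the openers a1, of which u are
   already matched, counts the balanced parts of d. Every part of d is
   smaller than every part of a1. *)
Lemma unmatched_after_word d : forall a2 a1 u, sorted geq d -> sorted geq a2 ->
  (forall x y, x \in d -> y \in a1 -> x < y) -> u <= size a1 ->
  unmatched_after (size a1 - u) (word_of d a2) = balanced_from (a1 ++ a2) d u.
Proof.
elim: d => [|x d IHd] a2 a1 u hd ha2 hlt hu.
  by rewrite /word_of; elim: a2 (size a1 - u) {ha2} => [|y a2 IH] c //=.
have hd' := path_sorted hd.
have hxd : forall x', x' \in d -> x' <= x by apply/allP/(order_path_min geq_trans hd).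
(* the closer x, read when every opener still to come is at most x *)
have closer_step : forall o1 o2 v, (forall x' y, x' \in x :: d -> y \in o1 -> x' < y) ->
    v <= size o1 -> sorted geq o2 -> all (fun y => y <= x) o2 ->
    unmatched_after (size o1 - v) ((x, true) :: word_of d o2) =
    balanced_from (o1 ++ o2) (x :: d) v.
  move=> o1 o2 v hlt1 hv ho2 hxo2 /=.
  have -> : count (fun y => x < y) (o1 ++ o2) = size o1.
    rewrite count_cat -[RHS]addn0; congr (_ + _).
      by apply/eqP; rewrite -all_count; apply/allP => y; apply: hlt1; rewrite mem_head.
    apply/eqP; rewrite eqn0Ngt -has_count; apply/hasP => -[y /(allP hxo2)].
    by rewrite ltnNge => /= ->.
  have hlt1' : forall x' y, x' \in d -> y \in o1 -> x' < y.
    by move=> x' y hx'; apply: hlt1; rewrite inE hx' orbT.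
  case: eqP => [<-|/eqP ne].
    by have := IHd o2 o1 (size o1) hd' ho2 hlt1' (leqnn _); rewrite subnn /= => ->.
  have hv' : v < size o1 by rewrite ltn_neqAle eq_sym ne hv.
  by rewrite -(subnSK hv') /= IHd.
elim: a2 a1 u ha2 hlt hu => [|y a2 IHa] a1 u ha2 hlt hu.
  have -> : word_of (x :: d) [::] = (x, true) :: word_of d [::] by rewrite !word_of_nil_r.
  exact: closer_step.
rewrite word_of_cons; case: leqP => hyx.
  apply: closer_step => //=; rewrite hyx /=.
  exact: order_path_min geq_trans (path_le geq_trans hyx ha2).
rewrite [unmatched_after _ _]/= -cat_rcons -IHa ?size_rcons ?subSn ?(path_sorted ha2) ?leqW //.
move=> x' z hx'; rewrite mem_rcons inE => /orP[/eqP ->|]; last exact: hlt.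
by move: hx'; rewrite inE => /orP[/eqP -> //|/hxd h]; exact: leq_ltn_trans h hyx.
Qed.

Lemma balanced_word A a b :
  sorted geq a -> sorted geq b -> balanced (A :: a) b = unmatched (word_of b a).
Proof.
move=> ha hb; rewrite /balanced (bal_auxE A b ha (leqnn 0)).
transitivity (balanced_from ([::] ++ a) b 0) => //.
by rewrite -unmatched_after_word // unmatched_afterE /= !subn0.
Qed.

Lemma balanced_from0 a d u : sorted geq d ->
  (forall x, x \in d -> u <= count (fun y => x < y) a) ->
  (balanced_from a d u = 0 <->
   forall j, j < size d -> u + j < count (fun y => nth 0 d j < y) a).
Proof.
elim: d u => [|x d IH] u hd hu /=; first by split.
have hd' := path_sorted hd.
have hxd : forall x', x' \in d -> x' <= x by apply/allP/(order_path_min geq_trans hd).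
have mono : forall x', x' \in d -> count (fun y => x < y) a <= count (fun y => x' < y) a.
  by move=> x' /hxd h; apply: sub_count => z /= hz; exact: leq_ltn_trans h hz.
have hux := hu x (mem_head _ _).
case: eqP => [e|ne]; first by split=> // /(_ 0 isT); rewrite addn0 e ltnn.
have hlt : u < count (fun y => x < y) a by rewrite ltn_neqAle hux andbT eq_sym; apply/eqP.
have IH' := IH u.+1 hd' (fun x' hx' => leq_trans hlt (mono _ hx')).
split.
  move=> /IH' h [|j] /=; first by rewrite addn0.
  by rewrite ltnS addnS => /h; rewrite addSn.
by move=> h; apply/IH' => j hj; rewrite addSn -addnS; apply: (h j.+1).
Qed.

Lemma strict_shifted_balanced A a b : sorted geq a -> sorted geq b ->
  strict_shifted (A :: a) b <-> balanced (A :: a) b = 0.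
Proof.
move=> ha hb; rewrite /balanced (bal_auxE A b ha (leqnn 0)).
have B := @balanced_from0 a b 0 hb (fun _ _ => leq0n _); rewrite /strict_shifted /=.
split.
  by move=> [_ h]; apply/B => j hj; rewrite add0n -nth_gt //; apply: h.
move=> /B h; split.
  rewrite ltnS leqNgt; apply/negP => hs.
  by have := leq_trans (h _ hs) (count_size _ a); rewrite add0n ltnn.
by move=> i hi; rewrite nth_gt //; have := h _ hi; rewrite add0n.
Qed.

Definition vector := (seq nat * seq nat)%type.

Definition rebracket (T : seq (nat * bool) -> seq (nat * bool)) (v : vector) : vector :=
  if v.1 is A :: a then let s := T (word_of v.2 a) in (A :: openers s, closers s) else v.

Definition phi : vector -> vector := rebracket (reopen 0).
Definition psi (t : nat) : vector -> vector := rebracket (reclose t).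
Arguments phi : simpl never.
Arguments psi : simpl never.

(* v' satisfies the constraints of a vector (alpha^i, beta^i) with i < k,
   and is obtained from v by moving parts around, keeping alpha_1: this is
   all the symbol-level conditions need. *)
Definition rearranges (v v' : vector) : Prop :=
  [/\ is_partition v'.1, is_partition v'.2, v'.1 != [::],
      all (fun x => x <= lpart v'.1) v'.2 &
      [/\ lpart v'.1 = lpart v.1, sumn v'.1 + sumn v'.2 = sumn v.1 + sumn v.2 &
          {subset v'.1 ++ v'.2 <= v.1 ++ v.2}]].

Lemma rebracket_rearranges (T : seq (nat * bool) -> seq (nat * bool)) (v : vector) :
  (forall s, sorted letter_le s -> sorted letter_le (T s)) ->
  (forall s, map fst (T s) = map fst s) ->
  is_partition v.1 -> is_partition v.2 -> v.1 != [::] ->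
  all (fun x => x <= lpart v.1) v.2 -> rearranges v (rebracket T v).
Proof.
case: v => [[|A a] b] //= hT hf /andP[/= /andP[hA hpa] hsa] /andP[hpb hsb] _ hbA.
have haA : all (fun x => x <= A) a := order_path_min geq_trans hsa.
have hs : sorted letter_le (T (word_of b a)).
  by apply/hT/word_of_sorted => //; apply: path_sorted hsa.
have hmem : {subset openers (T (word_of b a)) ++ closers (T (word_of b a)) <= b ++ a}.
  by move=> x /mem_openers_closers; rewrite hf (perm_mem (perm_word_of b a)).
have hpos : {in openers (T (word_of b a)) ++ closers (T (word_of b a)), forall x, 0 < x}.
  by move=> x /hmem; rewrite mem_cat => /orP[/(allP hpb)|/(allP hpa)].
have hle : {in openers (T (word_of b a)) ++ closers (T (word_of b a)), forall x, x <= A}.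
  by move=> x /hmem; rewrite mem_cat => /orP[/(allP hbA)|/(allP haA)].
split=> //=.
- rewrite /is_partition /= hA path_min_sorted.
    by rewrite sorted_openers // andbT; apply/allP => x hx; apply: hpos; rewrite mem_cat hx.
  by apply/allP => x hx; apply: hle; rewrite mem_cat hx.
- rewrite /is_partition sorted_closers // andbT.
  by apply/allP => x hx; apply: hpos; rewrite mem_cat hx orbT.
- by apply/allP => x hx; apply: hle; rewrite mem_cat hx orbT.
split=> //.
  rewrite -addnA sumn_openers_closers hf (perm_sumn (perm_word_of b a)) sumn_cat.
  by rewrite addnCA addnC.
move=> x; rewrite inE => /orP[/eqP ->|/hmem]; first by rewrite inE eqxx.
by rewrite inE !mem_cat orbC => ->; rewrite orbT.
Qed.

Section OneVector.

Variables (A : nat) (a b : seq nat).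
Hypotheses (ha : sorted geq a) (hb : sorted geq b).

Let s := word_of b a.
Let s_sorted : sorted letter_le s. Proof. exact: word_of_sorted. Qed.
Let count_openers : count (fun p => ~~ p.2) s = size a.
Proof. by rewrite -size_openers openers_word_of. Qed.
Let count_closers : count (fun p => p.2) s = size b.
Proof. by rewrite -size_closers closers_word_of. Qed.

Let size_rebracket (T : seq (nat * bool) -> seq (nat * bool)) :
  (forall s, map fst (T s) = map fst s) ->
  size (rebracket T (A :: a, b)).1 + size (rebracket T (A :: a, b)).2 =
    (size a + size b).+1 /\
  size (rebracket T (A :: a, b)).2 = count (fun p => p.2) (T s).
Proof.
move=> hf; rewrite /= size_openers size_closers addSn count_flags.
by rewrite -(size_map fst) hf size_map -count_flags count_openers count_closers.
Qed.

Lemma phi_sizes :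
  size (phi (A :: a, b)).1 = (size a + balanced (A :: a) b).+1 /\
  size (phi (A :: a, b)).2 + balanced (A :: a) b = size b.
Proof.
have [hsum hcl] := size_rebracket (map_fst_reopen 0).
have := count_reopen 0 s; rewrite unmatched_afterE subn0 -/s count_closers.
rewrite (balanced_word A ha hb) -/s -hcl /phi; lia.
Qed.

(* After reopening, no closer is left unmatched. *)
Lemma phi_strict : strict_shifted (phi (A :: a, b)).1 (phi (A :: a, b)).2.
Proof.
have hs' := reopen_sorted 0 s_sorted.
apply/strict_shifted_balanced; [exact: sorted_openers | exact: sorted_closers |].
rewrite balanced_word ?sorted_openers ?sorted_closers // word_of_split //.
by apply/eqP; rewrite -leqn0 unmatched_reopen_le.
Qed.

Lemma phiK : psi (balanced (A :: a) b) (phi (A :: a, b)) = (A :: a, b).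
Proof.
rewrite /psi /phi /rebracket /= word_of_split ?reopen_sorted //.
by rewrite balanced_word // -/s -(subn0 (unmatched s)) -unmatched_afterE reopenK
  openers_word_of closers_word_of.
Qed.

Section StrictShifted.

Hypothesis hst : strict_shifted (A :: a) b.

Let s_matched : unmatched s = 0.
Proof. by rewrite -(balanced_word A) //; apply/strict_shifted_balanced. Qed.

Lemma psiK t : phi (psi t (A :: a, b)) = (A :: a, b).
Proof.
rewrite /psi /phi /rebracket /= word_of_split ?reclose_sorted // recloseK ?s_matched //.
by rewrite openers_word_of closers_word_of.
Qed.

(* There are enough free openers to reclose t of them. *)
Variable t : nat.
Hypothesis ht : size b + t <= size a.

Let unmatched_psi : unmatched_after 0 (reclose t s) = t.
Proof.
by apply: unmatched_reclose; rewrite ?s_matched ?count_openers ?count_closers //; lia.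
Qed.

Lemma psi_sizes :
  size (psi t (A :: a, b)).1 + t = (size a).+1 /\ size (psi t (A :: a, b)).2 = size b + t.
Proof.
have [hsum hcl] := size_rebracket (map_fst_reclose t).
have := count_reopen 0 (reclose t s); rewrite recloseK ?s_matched // unmatched_psi.
rewrite count_closers -hcl /psi; lia.
Qed.

Lemma psi_balanced : balanced (psi t (A :: a, b)).1 (psi t (A :: a, b)).2 = t.
Proof.
have hs' := reclose_sorted t s_sorted.
rewrite /= balanced_word ?sorted_openers ?sorted_closers // word_of_split //.
by have := unmatched_psi; rewrite unmatched_afterE subn0.
Qed.

End StrictShifted.
End OneVector.

Definition no_vector : vector := ([::], [::]).

Definition vec (e : dsymb) (i : nat) : vector := nth no_vector (ds_vec e) i.-1.

Lemma alpha_vec e i : alpha e i = (vec e i).1. Proof. by []. Qed.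
Lemma beta_vec e i : beta e i = (vec e i).2. Proof. by []. Qed.

Definition map_vectors (g : nat -> vector -> vector) (e : dsymb) : dsymb :=
  DSymb (ds_D e) (mkseq (fun j => g j.+1 (nth no_vector (ds_vec e) j)) (size (ds_vec e))).

Lemma size_map_vectors g e : size (ds_vec (map_vectors g e)) = size (ds_vec e).
Proof. exact: size_mkseq. Qed.

Lemma vec_map_vectors g e i :
  1 <= i <= size (ds_vec e) -> vec (map_vectors g e) i = g i (vec e i).
Proof. by case: i => [|i] // /andP[_ hi]; rewrite /vec /= nth_mkseq. Qed.

Lemma map_vectorsK g1 g2 e :
  (forall i, 1 <= i <= size (ds_vec e) -> g2 i (g1 i (vec e i)) = vec e i) ->
  map_vectors g2 (map_vectors g1 e) = e.
Proof.
case: e => D vs H; congr DSymb.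
apply: (eq_from_nth (x0 := no_vector)); rewrite ?size_mkseq //.
by move=> j hj; rewrite !nth_mkseq ?size_mkseq //; exact: (H j.+1).
Qed.

Lemma map_vectors_weight g e :
  (forall i, 1 <= i <= size (ds_vec e) ->
     sumn (g i (vec e i)).1 + sumn (g i (vec e i)).2 = sumn (vec e i).1 + sumn (vec e i).2) ->
  ds_weight (map_vectors g e) = ds_weight e.
Proof.
move=> H; rewrite /ds_weight /=; congr (sumn _ + _).
rewrite -[in RHS](mkseq_nth no_vector (ds_vec e)) /mkseq -!map_comp.
by apply/eq_in_map => j; rewrite mem_iota add0n => hj; exact: (H j.+1).
Qed.

Lemma map_vectors_kmds k n g e : 0 < k -> is_kmds k n e ->
  (forall i, 1 <= i < k -> rearranges (vec e i) (g i (vec e i))) ->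
  g k (vec e k) = vec e k -> is_kmds k n (map_vectors g e).
Proof.
move=> hk0 [hs [hp [hw [h1 [h2 [h3 h4]]]]]] hg hgk.
have hv i : 1 <= i <= k -> vec (map_vectors g e) i = g i (vec e i).
  by move=> hi; rewrite vec_map_vectors // hs.
have hgi i : 1 <= i <= k ->
  [/\ lpart (g i (vec e i)).1 = lpart (vec e i).1,
      sumn (g i (vec e i)).1 + sumn (g i (vec e i)).2 = sumn (vec e i).1 + sumn (vec e i).2 &
      {subset (g i (vec e i)).1 ++ (g i (vec e i)).2 <= (vec e i).1 ++ (vec e i).2}].
  case/andP=> i1; rewrite leq_eqVlt => /orP[/eqP ->|ik]; first by rewrite hgk; split.
  by case: (hg i); rewrite ?i1.
split; first by rewrite size_map_vectors.
split.
  move=> i hi; rewrite alpha_vec beta_vec hv //.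
  case/andP: hi => i1; rewrite leq_eqVlt => /orP[/eqP ->|ik].
    by rewrite hgk -alpha_vec -beta_vec; apply: hp; rewrite hk0 leqnn.
  by case: (hg i); rewrite ?i1.
split.
  by rewrite -hw; apply: map_vectors_weight => i; rewrite hs => /hgi [].
split.
  move=> i /andP[i1 ik]; rewrite alpha_vec hv ?i1 ?(ltnW ik) //.
  by case: (hg i); rewrite ?i1.
split.
  move=> i /andP[i1 ik]; rewrite alpha_vec beta_vec hv ?i1 ?(ltnW ik) //.
  by case: (hg i); rewrite ?i1.
split.
  move=> i /andP[i2 ik]; have i1 : 1 <= i by apply: leq_trans i2.
  have hi1 : 1 <= i.-1 <= k by rewrite -ltnS prednK // i2 (leq_trans (leq_pred _) ik).
  rewrite !alpha_vec beta_vec !hv ?i1 //; have [hl _ _] := hgi _ hi1.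
  have hi : 1 <= i <= k by rewrite i1 ik.
  have [_ _ hsub] := hgi i hi.
  have := h3 i; rewrite i2 ik !alpha_vec beta_vec hl => /(_ isT) -[ha hb].
  by split; apply/allP => x hx; have := hsub x; rewrite mem_cat hx ?orbT => /(_ isT);
    rewrite mem_cat => /orP[/(allP ha)|/(allP hb)].
by rewrite alpha_vec beta_vec hv ?hk0 ?leqnn // hgk.
Qed.

Lemma rank_nonlast k e i m : i < k ->
  rank k e i = Posz m <-> size (alpha e i) = size (beta e i) + m + 1.
Proof.
move=> ik; rewrite /rank ik; split=> [h|->].
  have : Posz (size (alpha e i)) = (Posz m + 1 + Posz (size (beta e i)))%R by rewrite -h !subrK.
  by rewrite -!PoszD => -[->]; rewrite addnC addnA.
by rewrite !PoszD addrAC addrK addrAC subrr add0r.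
Qed.

Lemma nonlast_vector k n e i : is_kmds k n e -> 1 <= i < k ->
  exists A a b, [/\ vec e i = (A :: a, b), sorted geq a & sorted geq b].
Proof.
move=> [_ [hp [_ [h1 _]]]] /andP[i1 ik].
have [] := hp i; rewrite ?i1 ?(ltnW ik) //; have := h1 i; rewrite i1 ik => /(_ isT).
rewrite !alpha_vec beta_vec.
case: (vec e i) => [[|A a] b] //= _ /andP[_ /path_sorted ha] /andP[_ hb].
by exists A, a, b.
Qed.

Lemma nonlast_rearranges k n e i (T : seq (nat * bool) -> seq (nat * bool)) :
  is_kmds k n e -> 1 <= i < k ->
  (forall s, sorted letter_le s -> sorted letter_le (T s)) ->
  (forall s, map fst (T s) = map fst s) ->
  rearranges (vec e i) (rebracket T (vec e i)).
Proof.
move=> [_ [hp [_ [h1 [h2 _]]]]] /andP[i1 ik] hT hf.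
have [] := hp i; rewrite ?i1 ?(ltnW ik) // => ha hb.
by apply: rebracket_rearranges => //; [apply: h1 | apply: h2]; rewrite i1.
Qed.

Definition Phi k : dsymb -> dsymb := map_vectors (fun i v => if i < k then phi v else v).
Definition Psi k (t : nat -> nat) : dsymb -> dsymb :=
  map_vectors (fun i v => if i < k then psi (t i) v else v).

Definition durfee_class k n (m t : nat -> nat) (e : dsymb) : Prop :=
  is_kmds k n e /\ (forall i, 1 <= i <= k -> rank k e i = Posz (m i)) /\
  (forall i, 1 <= i < k -> nb k e i = t i).
Definition strict_class k n (m t : nat -> nat) (e : dsymb) : Prop :=
  is_strict_shifted_kmds k n e /\
  (forall i, 1 <= i < k -> rank k e i = Posz (m i + 2 * t i)) /\ rank k e k = Posz (m k).

Lemma rank_last k g e : size (ds_vec e) = k -> 0 < k -> g k (vec e k) = vec e k ->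
  rank k (map_vectors g e) k = rank k e k.
Proof.
move=> hs hk0 hgk; rewrite /rank ltnn !alpha_vec !beta_vec vec_map_vectors ?hgk //.
by rewrite hs hk0 leqnn.
Qed.

Lemma Phi_class k n m t e : 0 < k -> durfee_class k n m t e -> strict_class k n m t (Phi k e).
Proof.
move=> hk0 [he [hr hn]]; have hs := he.1.
have hv i : 1 <= i < k -> vec (Phi k e) i = phi (vec e i).
  by case/andP=> i1 ik; rewrite vec_map_vectors ?hs ?i1 ?ik ?(ltnW ik).
split; [split|split].
- apply: map_vectors_kmds => //; last by rewrite ltnn.
  move=> i hi; rewrite (proj2 (andP hi)).
  exact: nonlast_rearranges he hi (@reopen_sorted 0) (map_fst_reopen 0).
- move=> i hi; have [A [a [b [E ha hb]]]] := nonlast_vector he hi.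
  by rewrite !alpha_vec !beta_vec hv // E; apply: phi_strict.
- move=> i hi; have [A [a [b [E ha hb]]]] := nonlast_vector he hi.
  have /andP[i1 ik] := hi.
  have := hr i; rewrite i1 (ltnW ik) => /(_ isT) /(rank_nonlast _ _ ik).
  rewrite alpha_vec beta_vec E /= => hm.
  have := hn i hi; rewrite /nb ik alpha_vec beta_vec E /= => <-.
  rewrite (rank_nonlast _ _ ik) !alpha_vec !beta_vec hv // E.
  by have [] := phi_sizes A ha hb; lia.
- by rewrite rank_last ?ltnn //; apply: hr; rewrite hk0 leqnn.
Qed.

Lemma Psi_class k n m t e : 0 < k -> strict_class k n m t e -> durfee_class k n m t (Psi k t e).
Proof.
move=> hk0 [[he hst] [hr hrk]]; have hs := he.1.
have hv i : 1 <= i < k -> vec (Psi k t e) i = psi (t i) (vec e i).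
  by case/andP=> i1 ik; rewrite vec_map_vectors ?hs ?i1 ?ik ?(ltnW ik).
have vector_data i : 1 <= i < k ->
  exists A a b, [/\ vec e i = (A :: a, b), sorted geq a, sorted geq b,
    strict_shifted (A :: a) b & size a = size b + (m i + 2 * t i)].
  move=> hi; have [A [a [b [E ha hb]]]] := nonlast_vector he hi.
  exists A, a, b; split=> //; first by have := hst i hi; rewrite alpha_vec beta_vec E.
  have := hr i hi; rewrite (rank_nonlast _ _ (proj2 (andP hi))) alpha_vec beta_vec E /=.
  lia.
split; [|split].
- apply: map_vectors_kmds => //; last by rewrite ltnn.
  move=> i hi; rewrite (proj2 (andP hi)).
  exact: nonlast_rearranges he hi (@reclose_sorted (t i)) (map_fst_reclose (t i)).
- move=> i /andP[i1]; rewrite leq_eqVlt => /orP[/eqP ->|ik]; first by rewrite rank_last ?ltnn.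
  have hi : 1 <= i < k by rewrite i1 ik.
  have [A [a [b [E ha hb hsh hm]]]] := vector_data i hi.
  have ht : size b + t i <= size a by lia.
  rewrite (rank_nonlast _ _ ik) !alpha_vec !beta_vec hv // E.
  by have [] := psi_sizes ha hb hsh ht; lia.
- move=> i hi; have [A [a [b [E ha hb hsh hm]]]] := vector_data i hi.
  rewrite /nb (proj2 (andP hi)) !alpha_vec !beta_vec hv // E.
  by apply: psi_balanced => //; lia.
Qed.

Lemma PhiK k n m t e : durfee_class k n m t e -> Psi k t (Phi k e) = e.
Proof.
move=> [he [_ hn]]; apply: map_vectorsK => i; rewrite he.1 => /andP[i1 ik].
case: ltnP => [hik|] //=; have hi : 1 <= i < k by rewrite i1 hik.
have [A [a [b [E ha hb]]]] := nonlast_vector he hi.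
by move: (hn i hi); rewrite /nb hik !alpha_vec !beta_vec E /= => <-; apply: phiK.
Qed.

Lemma PsiK k n m t e : strict_class k n m t e -> Phi k (Psi k t e) = e.
Proof.
move=> [[he hst] _]; apply: map_vectorsK => i; rewrite he.1 => /andP[i1 ik].
case: ltnP => [hik|] //=; have hi : 1 <= i < k by rewrite i1 hik.
have [A [a [b [E ha hb]]]] := nonlast_vector he hi.
by rewrite E; apply: psiK => //; move: (hst i hi); rewrite alpha_vec beta_vec E.
Qed.

Theorem mainTheorem7 (k n : nat) (m t : nat -> nat) (hk : 1 <= k) :
  exists f :
    {e : dsymb | is_kmds k n e /\
                 (forall i, 1 <= i <= k -> rank k e i = Posz (m i)) /\
                 (forall i, 1 <= i < k -> nb k e i = t i)} ->
    {e : dsymb | is_strict_shifted_kmds k n e /\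
                 (forall i, 1 <= i < k -> rank k e i = Posz (m i + 2 * t i)) /\
                 rank k e k = Posz (m k)},
    bijective f.
Proof.
exists (fun x : {e | durfee_class k n m t e} =>
  exist (strict_class k n m t) (Phi k (sval x)) (Phi_class hk (svalP x))).
exists (fun y : {e | strict_class k n m t e} =>
  exist (durfee_class k n m t) (Psi k t (sval y)) (Psi_class hk (svalP y))).
- by move=> [e he]; apply: subset_eq_compat; apply: PhiK he.
- by move=> [e he]; apply: subset_eq_compat; apply: PsiK he.
Qed.
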